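(* Let $a,b\in C\ell_{1,2}$. If $\mathrm{Cim}(a)\neq\mathrm{Cim}(b)$, $\mathrm{Cim}(a)\neq 0$, $\mathrm{Cim}(b)\neq 0$ and $P(\mathrm{Cim}(a))=P(\mathrm{Cim}(b))=0$, then at least one of the four elements $\mathrm{Cim}(a)e_t+e_t\,\mathrm{Cim}(b)$, $t=0,1,2,3$, is invertible.
   Context: $C\ell_{1,2}$ is the real Clifford algebra generated by $i_1,i_2,i_3$ with $i_1^2=1$, $i_2^2=i_3^2=-1$ and $i_ti_m=-i_mi_t$ for $t\neq m$, with real basis $e_0=1$, $e_1=i_1$, $e_2=i_2$, $e_3=i_1i_2$, $e_4=i_3$, $e_5=i_1i_3$, $e_6=i_2i_3$, $e_7=i_1i_2i_3$. For $a=\sum_{t=0}^7 a_te_t$: $\mathrm{Cim}(a)=a_1e_1+a_2e_2+a_3e_3+a_4e_4+a_5e_5+a_6e_6$; $N(a)=a_0^2-a_1^2+a_2^2-a_3^2+a_4^2-a_5^2+a_6^2-a_7^2$; $T(a)=a_0a_7+a_2a_5-a_1a_6-a_3a_4$; $P(a)=N(a)^2+4T(a)^2$. An element $c$ is invertible if there is $d$ with $cd=dc=1$; this holds iff $P(c)\neq 0$. *)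

From HB Require Import structures.
From mathcomp Require Import all_boot all_order all_algebra.
From mathcomp Require Import reals.
Set Implicit Arguments. Unset Strict Implicit. Unset Printing Implicit Defensive.
Import Order.TTheory GRing.Theory Num.Theory.
Local Open Scope ring_scope.

(* Elements of Cl_{1,2}: coefficient vectors (a_0,...,a_7) w.r.t. the basis
   e_0=1, e_1=i1, e_2=i2, e_3=i1i2, e_4=i3, e_5=i1i3, e_6=i2i3, e_7=i1i2i3.
   The index t of e_t is the bitmask of the generators (bit0=i1, bit1=i2,
   bit2=i3) occurring in it, in increasing order. *)
Definition cl (R : realType) := {ffun 'I_8 -> R}.

Definition bitn (n k : nat) : bool := odd (n %/ 2 ^ k).

(* index of the blade e_i e_j (up to sign) *)
Definition xorn (i j : nat) : nat :=
  (bitn i 0 != bitn j 0) + 2 * (bitn i 1 != bitn j 1) + 4 * (bitn i 2 != bitn j 2).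

(* exponent of -1 in e_i e_j = +- e_(xorn i j):
   number of transpositions needed to sort the generators, plus the number
   of common generators squaring to -1 (i2^2 = i3^2 = -1, i1^2 = 1). *)
Definition sgnexp (i j : nat) : nat :=
  (bitn j 0 && bitn i 1) + (bitn j 0 && bitn i 2) + (bitn j 1 && bitn i 2)
  + (bitn i 1 && bitn j 1) + (bitn i 2 && bitn j 2).

Definition clmul (R : realType) (a b : cl R) : cl R :=
  [ffun k : 'I_8 => \sum_(i < 8) \sum_(j < 8)
     (if xorn i j == k then (-1) ^+ sgnexp i j * a i * b j else 0)].

Definition cle (R : realType) (t : nat) : cl R := [ffun k : 'I_8 => ((k : nat) == t)%:R].

Definition clone (R : realType) : cl R := cle R 0.

Definition coef (R : realType) (a : cl R) (t : nat) : R := a (inord t).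

Definition Cim (R : realType) (a : cl R) : cl R :=
  [ffun k : 'I_8 => if ((k : nat) == 0%N) || ((k : nat) == 7%N) then 0 else a k].

Definition Nf (R : realType) (a : cl R) : R :=
  coef a 0 ^+ 2 - coef a 1 ^+ 2 + coef a 2 ^+ 2 - coef a 3 ^+ 2
  + coef a 4 ^+ 2 - coef a 5 ^+ 2 + coef a 6 ^+ 2 - coef a 7 ^+ 2.

Definition Tf (R : realType) (a : cl R) : R :=
  coef a 0 * coef a 7 + coef a 2 * coef a 5 - coef a 1 * coef a 6 - coef a 3 * coef a 4.

Definition Pf (R : realType) (a : cl R) : R := Nf a ^+ 2 + 4 * Tf a ^+ 2.

Definition cl_invertible (R : realType) (c : cl R) : Prop :=
  exists d : cl R, clmul c d = clone R /\ clmul d c = clone R.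

From HB Require Import structures.
From mathcomp Require Import all_boot all_order all_algebra.
From mathcomp Require Import reals complex ring.
Set Implicit Arguments. Unset Strict Implicit. Unset Printing Implicit Defensive.
Import Order.TTheory GRing.Theory Num.Theory.
Local Open Scope ring_scope.

(* Pairing the coordinates [c_k] and [c_(7-k)] into [u_k = c_k + i c_(7-k)] turns
   [N c + 2i T c] into the complex quadratic form [u_0^2 - u_1^2 + u_2^2 - u_3^2],
   whose squared modulus is [P c].  Let [z_k], [w_k] (k = 1, 2, 3) be the complex
   coordinates of [x = Cim a] and [y = Cim b].  The values of the form at the four
   elements [x e_t + e_t y] determine the products [z_k w_k], so if none of these
   elements is invertible then [z_k w_k = 0] for every [k].  But [P x = P y = 0]
   reads [z_2^2 = z_1^2 + z_3^2] and [w_2^2 = w_1^2 + w_3^2], so the nonzero vectors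
   [z] and [w] each have at most one vanishing coordinate, and cannot have disjoint
   supports. *)

Lemma pythagorean_two_eq0 (F : idomainType) (u1 u2 u3 : F) :
  u2 ^+ 2 = u1 ^+ 2 + u3 ^+ 2 ->
  [/\ u1 = 0 -> u2 = 0 -> u3 = 0, u1 = 0 -> u3 = 0 -> u2 = 0
    & u2 = 0 -> u3 = 0 -> u1 = 0].
Proof.
have sqr0 (u : F) : u ^+ 2 = 0 -> u = 0 by move/eqP; rewrite sqrf_eq0 => /eqP.
move=> q; split=> e e'; apply: sqr0; move: q; rewrite e e' expr0n /=.
- by rewrite add0r => /esym.
- by rewrite addr0.
- by rewrite addr0 => /esym.
Qed.

Lemma pythagorean_disjoint_supp_eq0 (F : idomainType) (z1 z2 z3 w1 w2 w3 : F) :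
  z2 ^+ 2 = z1 ^+ 2 + z3 ^+ 2 -> w2 ^+ 2 = w1 ^+ 2 + w3 ^+ 2 ->
  z1 * w1 = 0 -> z2 * w2 = 0 -> z3 * w3 = 0 ->
  [/\ z1 = 0, z2 = 0 & z3 = 0] \/ [/\ w1 = 0, w2 = 0 & w3 = 0].
Proof.
move=> /pythagorean_two_eq0[z12 z13 z23] /pythagorean_two_eq0[w12 w13 w23].
move=> /eqP + /eqP + /eqP; rewrite !mulf_eq0 => /orP[]/eqP e1 /orP[]/eqP e2 /orP[]/eqP e3.
all: by [left; split; auto | right; split; auto].
Qed.

Section Coordinates.
Variable R : realType.

Definition mkcl (c0 c1 c2 c3 c4 c5 c6 c7 : R) : cl R :=
  [ffun k : 'I_8 => nth 0 [:: c0; c1; c2; c3; c4; c5; c6; c7] k].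

Lemma big_ord8 (F : 'I_8 -> R) :
  \sum_(i < 8) F i = F (inord 0) + F (inord 1) + F (inord 2) + F (inord 3)
    + F (inord 4) + F (inord 5) + F (inord 6) + F (inord 7).
Proof.
rewrite (eq_bigr (fun i : 'I_8 => F (inord i))) => [|i _]; last by rewrite inord_val.
rewrite -(big_mkord xpredT (fun i => F (inord i))) /index_iota /=.
by rewrite !big_cons big_nil !addrA addr0.
Qed.

Lemma mkcl_coef (c : cl R) :
  mkcl (coef c 0) (coef c 1) (coef c 2) (coef c 3)
       (coef c 4) (coef c 5) (coef c 6) (coef c 7) = c.
Proof.
apply/ffunP => k; rewrite ffunE /coef.
by case: k => [[|[|[|[|[|[|[|[|//]]]]]]]] ?] /=; congr (c _); apply/val_inj; rewrite /= inordK.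
Qed.

Lemma mkcl_add (a0 a1 a2 a3 a4 a5 a6 a7 b0 b1 b2 b3 b4 b5 b6 b7 : R) :
  mkcl a0 a1 a2 a3 a4 a5 a6 a7 + mkcl b0 b1 b2 b3 b4 b5 b6 b7 =
  mkcl (a0 + b0) (a1 + b1) (a2 + b2) (a3 + b3) (a4 + b4) (a5 + b5) (a6 + b6) (a7 + b7).
Proof. by apply/ffunP => k; rewrite !ffunE; case: k => [[|[|[|[|[|[|[|[|//]]]]]]]] ?]. Qed.

Lemma clmul_mkcl (a0 a1 a2 a3 a4 a5 a6 a7 b0 b1 b2 b3 b4 b5 b6 b7 : R) :
  clmul (mkcl a0 a1 a2 a3 a4 a5 a6 a7) (mkcl b0 b1 b2 b3 b4 b5 b6 b7) =
  mkcl (a0 * b0 + a1 * b1 - a2 * b2 + a3 * b3 - a4 * b4 + a5 * b5 - a6 * b6 - a7 * b7)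
       (a0 * b1 + a1 * b0 + a2 * b3 - a3 * b2 + a4 * b5 - a5 * b4 - a6 * b7 - a7 * b6)
       (a0 * b2 + a1 * b3 + a2 * b0 - a3 * b1 + a4 * b6 - a5 * b7 - a6 * b4 - a7 * b5)
       (a0 * b3 + a1 * b2 - a2 * b1 + a3 * b0 - a4 * b7 + a5 * b6 - a6 * b5 - a7 * b4)
       (a0 * b4 + a1 * b5 - a2 * b6 + a3 * b7 + a4 * b0 - a5 * b1 + a6 * b2 + a7 * b3)
       (a0 * b5 + a1 * b4 + a2 * b7 - a3 * b6 - a4 * b1 + a5 * b0 + a6 * b3 + a7 * b2)
       (a0 * b6 + a1 * b7 + a2 * b4 - a3 * b5 - a4 * b2 + a5 * b3 + a6 * b0 + a7 * b1)
       (a0 * b7 + a1 * b6 - a2 * b5 + a3 * b4 + a4 * b3 - a5 * b2 + a6 * b1 + a7 * b0).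
Proof.
apply/ffunP => k; rewrite !ffunE big_ord8 !big_ord8 !ffunE !inordK //.
by case: k => [[|[|[|[|[|[|[|[|//]]]]]]]] ?] /=; ring.
Qed.

Lemma Cim_mkcl (c0 c1 c2 c3 c4 c5 c6 c7 : R) :
  Cim (mkcl c0 c1 c2 c3 c4 c5 c6 c7) = mkcl 0 c1 c2 c3 c4 c5 c6 0.
Proof. by apply/ffunP => k; rewrite !ffunE; case: k => [[|[|[|[|[|[|[|[|//]]]]]]]] ?]. Qed.

Lemma cle_mkcl (t : nat) :
  cle R t = mkcl (t == 0)%:R (t == 1)%:R (t == 2)%:R (t == 3)%:R
                 (t == 4)%:R (t == 5)%:R (t == 6)%:R (t == 7)%:R.
Proof.
apply/ffunP => k; rewrite !ffunE.
by case: k => [[|[|[|[|[|[|[|[|//]]]]]]]] ?] /=; rewrite eq_sym.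
Qed.

Lemma Nf_mkcl (c0 c1 c2 c3 c4 c5 c6 c7 : R) :
  Nf (mkcl c0 c1 c2 c3 c4 c5 c6 c7) =
  c0 ^+ 2 - c1 ^+ 2 + c2 ^+ 2 - c3 ^+ 2 + c4 ^+ 2 - c5 ^+ 2 + c6 ^+ 2 - c7 ^+ 2.
Proof. by rewrite /Nf /coef !ffunE !inordK. Qed.

Lemma Tf_mkcl (c0 c1 c2 c3 c4 c5 c6 c7 : R) :
  Tf (mkcl c0 c1 c2 c3 c4 c5 c6 c7) = c0 * c7 + c2 * c5 - c1 * c6 - c3 * c4.
Proof. by rewrite /Tf /coef !ffunE !inordK. Qed.

Definition clconj (c : cl R) : cl R :=
  [ffun k : 'I_8 => if ((k : nat) == 0%N) || ((k : nat) == 7%N) then c k else - c k].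

Lemma clconj_mkcl (c0 c1 c2 c3 c4 c5 c6 c7 : R) :
  clconj (mkcl c0 c1 c2 c3 c4 c5 c6 c7) =
  mkcl c0 (- c1) (- c2) (- c3) (- c4) (- c5) (- c6) c7.
Proof. by apply/ffunP => k; rewrite !ffunE; case: k => [[|[|[|[|[|[|[|[|//]]]]]]]] ?]. Qed.

(* [c * clconj c = clconj c * c = N c + 2 T c e_7], and [e_7] is central with
   [e_7^2 = -1], so [(N + 2 T e_7) (N - 2 T e_7) = P]. *)
Lemma Pf_neq0_invertible (c : cl R) : Pf c != 0 -> cl_invertible c.
Proof.
move=> Pc; exists (clmul (clconj c) (mkcl (Nf c / Pf c) 0 0 0 0 0 0 (- (2 * Tf c) / Pf c))).
have -> : clone R = mkcl 1 0 0 0 0 0 0 0 by rewrite /clone cle_mkcl.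
move: Pc; rewrite /Pf -(mkcl_coef c) clconj_mkcl Nf_mkcl Tf_mkcl.
move: (coef c 0) (coef c 1) (coef c 2) (coef c 3) (coef c 4) (coef c 5) (coef c 6) (coef c 7).
by move=> c0 c1 c2 c3 c4 c5 c6 c7 Pc; rewrite !clmul_mkcl; split; congr mkcl; field.
Qed.

End Coordinates.

Section ComplexForm.
Variable R : realType.
Local Open Scope complex_scope.

Definition Qf (c : cl R) : R[i] := Nf c +i* (2 * Tf c).

Lemma Pf_eq0 (c : cl R) : (Pf c == 0) = (Qf c == 0).
Proof.
have T4 : 0 <= 4 * Tf c ^+ 2 by rewrite mulr_ge0 ?sqr_ge0.
rewrite /Pf paddr_eq0 ?sqr_ge0 // sqrf_eq0 mulf_eq0 sqrf_eq0 eq_complex /= mulf_eq0.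
by rewrite !pnatr_eq0.
Qed.

Lemma Qf_mkcl (c0 c1 c2 c3 c4 c5 c6 c7 : R) :
  Qf (mkcl c0 c1 c2 c3 c4 c5 c6 c7) =
  (c0 +i* c7) ^+ 2 - (c1 +i* c6) ^+ 2 + (c2 +i* c5) ^+ 2 - (c3 +i* c4) ^+ 2.
Proof. by rewrite /Qf Nf_mkcl Tf_mkcl !expr2 /=; congr Complex; ring. Qed.

Definition clpure (z1 z2 z3 : R[i]) : cl R :=
  mkcl 0 (complex.Re z1) (complex.Re z2) (complex.Re z3)
       (complex.Im z3) (complex.Im z2) (complex.Im z1) 0.

Lemma Cim_clpure (c : cl R) :
  Cim c = clpure (coef c 1 +i* coef c 6) (coef c 2 +i* coef c 5) (coef c 3 +i* coef c 4).
Proof. by rewrite -{1}(mkcl_coef c) Cim_mkcl. Qed.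

Lemma clpure0 : clpure 0 0 0 = 0.
Proof. by apply/ffunP => k; rewrite !ffunE; case: k => [[|[|[|[|[|[|[|[|//]]]]]]]] ?]. Qed.

Lemma Qf_clpure (z1 z2 z3 : R[i]) : Qf (clpure z1 z2 z3) = z2 ^+ 2 - z1 ^+ 2 - z3 ^+ 2.
Proof.
by case: z1 z2 z3 => [? ?] [? ?] [? ?]; rewrite Qf_mkcl !expr2 /=; congr Complex; ring.
Qed.

Definition twisted_sum (x y : cl R) (t : nat) : cl R :=
  clmul x (cle R t) + clmul (cle R t) y.

(* With [x], [y] the two pure elements, [Q t = +-(Qf x + Qf y) + 2 (+-z1 w1 + z2 w2 +- z3 w3)],
   and the sign patterns for [t = 0, 1, 2, 3] are pairwise orthogonal. *)
Lemma Qf_twisted_sums (z1 z2 z3 w1 w2 w3 : R[i]) :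
  let Q t := Qf (twisted_sum (clpure z1 z2 z3) (clpure w1 w2 w3) t) in
  [/\ Q 1%N + Q 2%N - Q 0%N - Q 3%N = 8 * (z1 * w1),
      Q 0%N + Q 1%N + Q 2%N + Q 3%N = 8 * (z2 * w2)
    & Q 2%N + Q 3%N - Q 0%N - Q 1%N = 8 * (z3 * w3)].
Proof.
case: z1 z2 z3 w1 w2 w3 => [? ?] [? ?] [? ?] [? ?] [? ?] [? ?].
rewrite /twisted_sum !cle_mkcl /= !clmul_mkcl !mkcl_add !Qf_mkcl !expr2 /=.
by split; congr Complex; ring.
Qed.

Lemma null_twisted_sums_eq0 (z1 z2 z3 w1 w2 w3 : R[i]) :
  Pf (clpure z1 z2 z3) = 0 -> Pf (clpure w1 w2 w3) = 0 ->
  (forall t : 'I_4, Pf (twisted_sum (clpure z1 z2 z3) (clpure w1 w2 w3) t) = 0) ->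
  clpure z1 z2 z3 = 0 \/ clpure w1 w2 w3 = 0.
Proof.
have pythagorean u1 u2 u3 : Pf (clpure u1 u2 u3) = 0 -> u2 ^+ 2 = u1 ^+ 2 + u3 ^+ 2.
  by move/eqP; rewrite Pf_eq0 Qf_clpure -addrA -opprD subr_eq0 => /eqP.
have mul8_eq0 (u v : R[i]) : 0 = 8 * (u * v) -> u * v = 0.
  by move/esym/eqP; rewrite mulf_eq0 pnatr_eq0 => /eqP.
move=> /pythagorean qz /pythagorean qw Q0.
have {}Q0 t : (t < 4)%N -> Qf (twisted_sum (clpure z1 z2 z3) (clpure w1 w2 w3) t) = 0.
  by move=> t4; apply/eqP; rewrite -Pf_eq0; apply/eqP/(Q0 (Ordinal t4)).
have [] := Qf_twisted_sums z1 z2 z3 w1 w2 w3; rewrite !Q0 // !(addr0, subr0).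
move=> /mul8_eq0 zw1 /mul8_eq0 zw2 /mul8_eq0 zw3.
case: (pythagorean_disjoint_supp_eq0 qz qw zw1 zw2 zw3) => -[-> -> ->].
  by left; rewrite clpure0.
by right; rewrite clpure0.
Qed.

End ComplexForm.

Theorem lemma5p2 (R : realType) (a b : cl R) :
  Cim a != Cim b -> Cim a != 0 -> Cim b != 0 ->
  Pf (Cim a) = 0 -> Pf (Cim b) = 0 ->
  exists t : 'I_4,
    cl_invertible (clmul (Cim a) (cle R t) + clmul (cle R t) (Cim b)).
Proof.
move=> _ a0 b0 Pa Pb.
have [t Pt | /(_ _)/negbFE/eqP Pt] :=
  pickP (fun t : 'I_4 => Pf (twisted_sum (Cim a) (Cim b) t) != 0).
  by exists t; apply: Pf_neq0_invertible.
move: a0 b0; rewrite (Cim_clpure a) (Cim_clpure b) in Pa Pb Pt *.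
by case: (null_twisted_sums_eq0 Pa Pb Pt) => ->; rewrite eqxx.
Qed.
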